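(* Let $\mathcal A_1'=\mathrm{MSG}(\mathcal S_1)\setminus\{a_n\}$, for $s\in\mathbb N$ let $\mathrm{Ap}_1^{(s)}=\mathrm{Ap}_1\cap s\mathcal A_1'$, and let $N=\max\{s\in\mathbb N:\mathrm{Ap}_1^{(s)}\ne\emptyset\}$. Then $(\mathrm{Ap}_1,\le_1)$ is graded if and only if $\sum_{s=0}^{N}|\mathrm{Ap}_1^{(s)}|=d$.
   Context: Let $d\ge 1$ and $0<a_1<\dots<a_n=d$ integers with $\gcd(a_1,\dots,a_n)=1$. Let $\mathcal S_1\subseteq\mathbb N$ be the numerical semigroup generated by $a_1,\dots,a_n$ and $\mathrm{MSG}(\mathcal S_1)$ its minimal system of generators. Partial order: $y\le_1 z$ iff $z-y\in\mathcal S_1$. $\mathrm{Ap}_1=\{y\in\mathcal S_1:y-d\notin\mathcal S_1\}$ with induced order (it has exactly $d$ elements). For a finite set $A\subset\mathbb N$ and $s\ge1$, $sA=\{b_1+\dots+b_s: b_j\in A\}$, and $0A=\{0\}$. A finite poset is graded if there is $\rho:P\to\mathbb N$ with $\rho(z)=\rho(y)+1$ whenever $z$ covers $y$ (i.e. $y<z$ with nothing strictly between). *)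

From mathcomp Require Import all_boot.
Set Implicit Arguments. Unset Strict Implicit. Unset Printing Implicit Defensive.

(* The generators a_1 < ... < a_n are given as a sequence [a] of naturals. *)

Definition inS (a : seq nat) (x : nat) : Prop :=
  exists c : seq nat, size c = size a /\
    x = \sum_(i < size a) nth 0 c i * nth 0 a i.

Definition le1 (a : seq nat) (y z : nat) : Prop := y <= z /\ inS a (z - y).

Definition inMSG (a : seq nat) (x : nat) : Prop :=
  inS a x /\ 0 < x /\
  ~ (exists y z, 0 < y /\ 0 < z /\ inS a y /\ inS a z /\ x = y + z).

Definition Ap1 (a : seq nat) (d : nat) (y : nat) : Prop :=
  inS a y /\ ~ (d <= y /\ inS a (y - d)).

Definition A1' (a : seq nat) (d : nat) (x : nat) : Prop := inMSG a x /\ x <> d.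

Definition sumset (A : nat -> Prop) (s : nat) (x : nat) : Prop :=
  exists l : seq nat, size l = s /\ (forall b, b \in l -> A b) /\ sumn l = x.

Definition Ap1s (a : seq nat) (d s : nat) (x : nat) : Prop :=
  Ap1 a d x /\ sumset (A1' a d) s x.

Definition has_card (P : nat -> Prop) (k : nat) : Prop :=
  exists l : seq nat, uniq l /\ (forall x, P x <-> x \in l) /\ size l = k.

Definition covers (P : nat -> Prop) (le : nat -> nat -> Prop) (y z : nat) : Prop :=
  P y /\ P z /\ le y z /\ y <> z /\
  ~ (exists w, P w /\ le y w /\ le w z /\ w <> y /\ w <> z).

Definition graded (P : nat -> Prop) (le : nat -> nat -> Prop) : Prop :=
  exists rho : nat -> nat, forall y z, covers P le y z -> rho z = (rho y).+1.

Definition isMaxLevel (a : seq nat) (d N : nat) : Prop :=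
  (exists x, Ap1s a d N x) /\ (forall s, (exists x, Ap1s a d s x) -> s <= N).

From mathcomp Require Import all_boot zify boolp.
Set Implicit Arguments. Unset Strict Implicit. Unset Printing Implicit Defensive.

(* A pair y <_1 z of Apery elements is a covering pair exactly when z - y is a
   minimal generator, and this generator is never d because z - d is not in
   S_1.  Hence every Apery element lies in some level Ap_1^(s), a rank function
   must equal the level plus a constant, and the poset is graded iff no element
   lies in two levels.  Since gcd = 1, Ap_1 has one element per residue class
   mod d, so counting the pairs (s, x) with x in Ap_1^(s) shows that the level
   sizes add up to d exactly when every element lies in a single level. *)

Section NumericalSemigroup.
Variable a : seq nat.

Lemma inS_coef x :
  inS a x <-> exists f : nat -> nat, x = \sum_(i < size a) f i * nth 0 a i.
Proof.
split=> [[c [_ ->]]|[f ->]]; first by exists (nth 0 c).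
exists (mkseq f (size a)); rewrite size_mkseq; split=> //.
by apply: eq_bigr => i _; rewrite nth_mkseq.
Qed.

Lemma inS0 : inS a 0.
Proof. by apply/inS_coef; exists (fun=> 0); rewrite big1. Qed.

Lemma inSD x y : inS a x -> inS a y -> inS a (x + y).
Proof.
move=> /inS_coef [f ->] /inS_coef [g ->]; apply/inS_coef.
by exists (fun i => f i + g i); rewrite -big_split; apply: eq_bigr => i _; rewrite mulnDl.
Qed.

Lemma inS_sumn l : (forall b, b \in l -> inS a b) -> inS a (sumn l).
Proof.
elim: l => [|b l IHl] Sl /=; first exact: inS0.
apply: inSD; first by apply: Sl; rewrite mem_head.
by apply: IHl => c cl; apply: Sl; rewrite inE cl orbT.
Qed.

Lemma inS_mul_gen m c : c \in a -> inS a (m * c).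
Proof.
move=> ca; apply/inS_coef; exists (fun i => if i == index c a then m else 0).
have ic : index c a < size a by rewrite index_mem.
rewrite (bigD1 (Ordinal ic)) //= eqxx nth_index // big1 ?addn0 // => i ni.
by rewrite -val_eqE /= in ni; rewrite (negPf ni).
Qed.

Lemma inS_MSG_factor x :
  inS a x -> exists l, (forall b, b \in l -> inMSG a b) /\ sumn l = x.
Proof.
elim/ltn_ind: x => x IHx Sx; have [->|x_gt0] := posnP x; first by exists [::].
have [MSGx|notMSGx] := pselect (inMSG a x).
  by exists [:: x]; split=> [b|]; rewrite ?inE /= ?addn0 // => /eqP ->.
have [y [z [y_gt0 [z_gt0 [Sy [Sz Exyz]]]]]] :
    exists y z, 0 < y /\ 0 < z /\ inS a y /\ inS a z /\ x = y + z.
  by apply: contrapT => nodec; apply: notMSGx.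
have [|ly [MSGly Ely]] := IHx y _ Sy; first lia.
have [|lz [MSGlz Elz]] := IHx z _ Sz; first lia.
exists (ly ++ lz); split=> [b|]; last by rewrite sumn_cat Ely Elz Exyz.
by rewrite mem_cat => /orP [/MSGly|/MSGlz].
Qed.

Variable d : nat.

Lemma Ap1_le1 y z : inS a y -> le1 a y z -> Ap1 a d z -> Ap1 a d y.
Proof.
move=> Sy [yz Szy] [Sz notSzd]; split=> // -[dy Syd]; apply: notSzd; split; first lia.
have -> : z - d = (z - y) + (y - d) by lia.
exact: inSD.
Qed.

Lemma covers_Ap1 y z : covers (Ap1 a d) (le1 a) y z <->
  [/\ Ap1 a d y, Ap1 a d z, y <= z & inMSG a (z - y)].
Proof.
split=> [[Ay [Az [[yz Szy] [neq_yz nomid]]]]|[Ay Az yz [Szy [zy_gt0 indec]]]].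
  split=> //; split=> //; split; first lia.
  move=> [u [v [u_gt0 [v_gt0 [Su [Sv Ezy]]]]]]; apply: nomid; exists (y + u).
  have Syu : inS a (y + u) by apply: inSD => //; case: Ay.
  have Ezyu : z - (y + u) = v by lia.
  have le_yu_z : le1 a (y + u) z by split; [lia | rewrite Ezyu].
  split; first exact: Ap1_le1 Syu le_yu_z Az.
  by split; [split; [lia | rewrite addKn] | split; [|lia]].
split=> //; split=> //; split=> //; split; first lia.
move=> [w [_ [[yw Swy] [[wz Szw] [neq_wy neq_wz]]]]]; apply: indec.
by exists (w - y), (z - w); do 4 (split; first (try lia; done)); lia.
Qed.

Lemma Ap1_has_level x : Ap1 a d x -> exists s, Ap1s a d s x.
Proof.
move=> Ax; have [Sx notSxd] := Ax; have [l [MSGl El]] := inS_MSG_factor Sx.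
exists (size l); split=> //; exists l; split=> //; split=> // b bl.
split; first exact: MSGl; move=> bd; subst b; apply: notSxd.
have := perm_sumn (perm_to_rem bl); rewrite /= El => Ex.
split; first lia.
have -> : x - d = sumn (rem d l) by lia.
by apply: inS_sumn => b /mem_rem /MSGl [].
Qed.

Lemma graded_rank_level (rho : nat -> nat) :
    (forall y z, covers (Ap1 a d) (le1 a) y z -> rho z = (rho y).+1) ->
  forall s x, Ap1s a d s x -> rho x = rho 0 + s.
Proof.
move=> rhoS s x [Ax [l [Els [A1'l Elx]]]]; subst s x.
elim: l Ax A1'l => [|g l IHl] Ax A1'l; first by rewrite addn0.
have [MSGg gd] : A1' a d g by apply: A1'l; rewrite mem_head.
have A1'l' b : b \in l -> A1' a d b by move=> bl; apply: A1'l; rewrite inE bl orbT.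
have Sl : inS a (sumn l) by apply: inS_sumn => b /A1'l' [[]].
have Al : Ap1 a d (sumn l).
  by apply: (Ap1_le1 Sl _ Ax); split; rewrite /= ?leq_addl // addnK; case: MSGg.
rewrite (rhoS (sumn l)) ?IHl ?addnS //.
by apply/covers_Ap1; split; rewrite //= ?leq_addl // addnK.
Qed.

Definition Ap1_level x : nat :=
  if pselect (exists s, Ap1s a d s x) is left e then sval (cid e) else 0.

Lemma Ap1_levelE s x :
    (forall x s t, Ap1s a d s x -> Ap1s a d t x -> s = t) ->
  Ap1s a d s x -> Ap1_level x = s.
Proof.
rewrite /Ap1_level => uniq_level xs; case: pselect => [e|[]]; last by exists s.
by case: cid => t xt /=; apply: uniq_level xt xs.
Qed.

Lemma graded_Ap1E : graded (Ap1 a d) (le1 a) <->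
  forall x s t, Ap1s a d s x -> Ap1s a d t x -> s = t.
Proof.
split=> [[rho rhoS] x s t xs xt|uniq_level].
  apply/eqP; rewrite -(eqn_add2l (rho 0)).
  by rewrite -(graded_rank_level rhoS xs) -(graded_rank_level rhoS xt).
exists Ap1_level => y z /covers_Ap1 [Ay Az yz MSGzy].
have [s [_ [l [ls [A1'l El]]]]] := Ap1_has_level Ay.
have zyd : z - y <> d.
  move=> Ezy; case: Az => _ []; split; first lia.
  have -> : z - d = y by lia.
  by case: Ay.
rewrite (@Ap1_levelE s y) //; first apply: (@Ap1_levelE s.+1 z) => //.
  split=> //; exists (z - y :: l); split; first by rewrite /= ls.
  by split=> [b /[!inE] /orP [/eqP ->|/A1'l]|] //=; rewrite El; lia.
by split=> //; exists l.
Qed.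

End NumericalSemigroup.

Lemma inS_residue a d b : 0 < d -> {subset b <= a} ->
  forall k, exists x, inS a x /\ x = k * gcdn (\big[gcdn/0]_(y <- b) y) d %[mod d].
Proof.
move=> d_gt0; elim: b => [|c b IHb] sub_ba k.
  by exists 0; split; [exact: inS0 | rewrite big_nil gcd0n modnMl mod0n].
have {}IHb := IHb (fun y yb => sub_ba y (mem_behead (s := c :: b) yb)).
rewrite big_cons -gcdnA; set g := gcdn _ d.
have [->|c_gt0] := posnP c; first by rewrite gcd0n; apply: IHb.
have [u v Euv _] := egcdnP g c_gt0.
have [y [Sy Ey]] := IHb (k * v * d.-1).
exists (k * u * c + y); split; first by apply: inSD => //; apply/inS_mul_gen/sub_ba/mem_head.
(* Bezout: [u * c = v * g + gcdn c g], and [y] cancels [k * v * g] modulo [d]. *)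
have y_kvg : (y + k * v * g) %% d = 0.
  rewrite -modnDml Ey modnDml.
  have -> : k * v * d.-1 * g + k * v * g = k * v * g * d.
    by rewrite -[in RHS](prednK d_gt0) mulnS addnC (mulnAC (k * v) d.-1 g).
  exact: modnMl.
apply/eqP; rewrite -(eqn_modDr (k * v * g)) -addnA -modnDmr y_kvg addn0.
by rewrite -!mulnA Euv mulnDr addnC.
Qed.

Lemma has_card_Ap1 a d : 0 < d -> d \in a ->
  (forall r, exists x, inS a x /\ x = r %[mod d]) -> has_card (Ap1 a d) d.
Proof.
move=> d_gt0 da residue.
have exP r : exists x, `[< inS a x >] && (x == r %[mod d]).
  by have [x [Sx Ex]] := residue r; exists x; rewrite Ex eqxx andbT; apply/asboolP.
pose m r := ex_minn (exP r).
have Sm r : inS a (m r) by rewrite /m; case: ex_minnP => x /andP [/asboolP].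
have Em r : m r = r %[mod d] by rewrite /m; case: ex_minnP => x /andP [_ /eqP].
have m_min r x : inS a x -> x = r %[mod d] -> m r <= x.
  move=> Sx Ex; rewrite /m; case: ex_minnP => y _ ymin; apply: ymin.
  by rewrite Ex eqxx andbT; apply/asboolP.
exists [seq m r | r <- iota 0 d]; split; last split; last by rewrite size_map size_iota.
  rewrite map_inj_in_uniq ?iota_uniq // => r1 r2 /[!mem_iota] /= r1d r2d Em12.
  by have := Em r1; rewrite Em12 Em !modn_small.
move=> x; split=> [[Sx notSxd]|/mapP [r _ ->]].
  have mx : m (x %% d) <= x by apply: m_min; rewrite ?modn_mod.
  have /dvdnP [[|q] Eq] : d %| x - m (x %% d) by rewrite -eqn_mod_dvd // Em modn_mod.
    have -> : x = m (x %% d) by lia.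
    by apply: map_f; rewrite mem_iota ltn_pmod.
  case: notSxd; split; first by rewrite mulSn in Eq; lia.
  have -> : x - d = m (x %% d) + q * d by rewrite mulSn in Eq; lia.
  by apply: inSD; [apply: Sm | apply: inS_mul_gen].
split=> [|[dm Smd]]; first exact: Sm.
have : m r <= m r - d by apply: m_min; rewrite // -(Em r) -(modnDr (m r - d)) subnK.
lia.
Qed.

Lemma has_card_unique P k k' : has_card P k -> has_card P k' -> k = k'.
Proof.
move=> [l [ul [Pl <-]]] [l' [ul' [Pl' <-]]]; apply/perm_size/uniq_perm => // x.
by apply/idP/idP => [/Pl /Pl'|/Pl' /Pl].
Qed.

Lemma sum_eq_size_pos (T : eqType) (L : seq T) (h : T -> nat) :
    {in L, forall x, 0 < h x} ->
  \sum_(x <- L) h x = size L <-> {in L, forall x, h x = 1}.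
Proof.
move=> h_gt0; have -> : \sum_(x <- L) h x = size L + \sum_(x <- L) (h x).-1.
  rewrite -sum1_size -big_split big_seq_cond [RHS]big_seq_cond.
  by apply: eq_bigr => x /andP [/h_gt0 hx _] /=; lia.
rewrite -[X in _ = X]addn0; split=> [/addnI /eqP|h1].
  by rewrite sum_nat_seq_eq0 => /allP h1 x xL; have := h1 x xL; have := h_gt0 x xL; lia.
by congr (_ + _); rewrite big_seq big1 // => x /h1 ->.
Qed.

Lemma count_sumE (T : Type) (p : pred T) r : count p r = \sum_(x <- r) p x.
Proof. by rewrite -sum1_count big_mkcond; apply: eq_bigr => x _; case: (p x). Qed.

Section DoubleCounting.
Variables (L : seq nat) (R : nat -> nat -> Prop) (N : nat).
Hypotheses (L_uniq : uniq L) (R_in_L : forall s x, R s x -> x \in L)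
  (R_le : forall s x, R s x -> s <= N) (R_total : forall x, x \in L -> exists s, R s x).

Lemma has_card_count s : has_card (R s) (count (fun x => `[< R s x >]) L).
Proof.
exists [seq x <- L | `[< R s x >]]; split; first exact: filter_uniq.
split=> [x|]; last by rewrite size_filter.
rewrite mem_filter; split=> [Rsx|/andP [/asboolP //]].
by rewrite (R_in_L Rsx) andbT; apply/asboolP.
Qed.

Let count_levels_eq1 x : x \in L ->
  count (fun s => `[< R s x >]) (iota 0 N.+1) = 1 <-> forall s t, R s x -> R t x -> s = t.
Proof.
move=> xL; have mem_levels s : (s \in [seq s <- iota 0 N.+1 | `[< R s x >]]) = `[< R s x >].
  by rewrite mem_filter mem_iota /= ltnS andb_idr // => /asboolP /R_le.
split=> [|uniq_level].
  rewrite -size_filter => size1 s t /asboolP Rs /asboolP Rt.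
  move: Rs Rt; rewrite -!mem_levels.
  by case: [seq _ <- _ | _] size1 => [|u []] //= _; rewrite !inE => /eqP -> /eqP ->.
have [s0 Rs0] := R_total xL.
rewrite (@eq_in_count _ _ (pred1 s0)) ?count_uniq_mem ?iota_uniq //.
  by rewrite mem_iota ltnS (R_le Rs0).
by move=> s _ /=; apply/asboolP/eqP => [Rs|->//]; apply: uniq_level Rs Rs0.
Qed.

Lemma sum_count_eq_size :
  \sum_(0 <= s < N.+1) count (fun x => `[< R s x >]) L = size L <->
  forall x s t, R s x -> R t x -> s = t.
Proof.
have -> : \sum_(0 <= s < N.+1) count (fun x => `[< R s x >]) L =
    \sum_(x <- L) count (fun s => `[< R s x >]) (iota 0 N.+1).
  under eq_bigr => s _ do rewrite count_sumE.
  by rewrite exchange_big; apply: eq_bigr => x _; rewrite count_sumE /index_iota subn0.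
rewrite sum_eq_size_pos => [|x xL]; last first.
  have [s Rs] := R_total xL; rewrite -has_count; apply/hasP; exists s; last exact/asboolP.
  by rewrite mem_iota ltnS (R_le Rs).
split=> [levels1 x s t Rs|uniq_level x xL].
  by have xL := R_in_L Rs; apply: (count_levels_eq1 xL).1 Rs; apply: levels1.
by apply/(count_levels_eq1 xL); apply: uniq_level.
Qed.

End DoubleCounting.

Lemma Ap1s_le a d s x : Ap1s a d s x -> s <= x.
Proof.
move=> [_ [l [<- [A1'l <-]]]]; rewrite sumnE -sum1_size big_seq [leqRHS]big_seq.
by apply: leq_sum => b /A1'l [[_ []]].
Qed.

Lemma isMaxLevel_exists a d (L : seq nat) :
  0 < d -> (forall x, Ap1 a d x -> x \in L) -> exists N, isMaxLevel a d N.
Proof.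
move=> d_gt0 Ap1_L.
have level0 : exists s, `[< exists x, Ap1s a d s x >].
  exists 0; apply/asboolP; exists 0; split; last by exists [::].
  by split=> [|[]]; [apply: inS0 | lia].
have level_ub s : `[< exists x, Ap1s a d s x >] -> s <= \max_(x <- L) x.
  move=> /asboolP [x xs]; apply: leq_trans (Ap1s_le xs) _.
  by apply: leq_bigmax_seq => //; apply: Ap1_L; case: xs.
have [N /asboolP levelN N_max] := ex_maxnP level0 level_ub.
by exists N; split=> // s /asboolP; apply: N_max.
Qed.

Lemma isMaxLevel_unique a d N N' : isMaxLevel a d N -> isMaxLevel a d N' -> N = N'.
Proof. by move=> [levelN N_max] [levelN' N'_max]; apply/anti_leq; rewrite N_max ?N'_max. Qed.

Theorem mainTheorem3 (a : seq nat) (d : nat)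
  (Hne : a != [::])
  (Hsort : sorted ltn a)
  (Hpos : 0 < head 0 a)
  (Hlast : last 0 a = d)
  (Hd : 1 <= d)
  (Hgcd : \big[gcdn/0]_(x <- a) x = 1) :
  graded (Ap1 a d) (le1 a) <->
  exists (N : nat) (c : nat -> nat),
    isMaxLevel a d N /\
    (forall s, s <= N -> has_card (Ap1s a d s) (c s)) /\
    \sum_(0 <= s < N.+1) c s = d.
Proof.
have da : d \in a by rewrite -Hlast; case: (a) Hne => // x a' _; apply: mem_last.
have residue r : exists x, inS a x /\ x = r %[mod d].
  have [x [Sx Ex]] := inS_residue Hd (fun y (ya : y \in a) => ya) r.
  by exists x; rewrite Ex Hgcd gcd1n muln1.
have [L [L_uniq [Ap1_L size_L]]] := has_card_Ap1 Hd da residue.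
have [N maxN] := isMaxLevel_exists Hd (fun x => (Ap1_L x).1).
have Ap1s_L s x : Ap1s a d s x -> x \in L by move=> [/Ap1_L].
have level_le s x : Ap1s a d s x -> s <= N by move=> xs; apply: maxN.2; exists x.
have level_ex x : x \in L -> exists s, Ap1s a d s x by move/Ap1_L/Ap1_has_level.
rewrite graded_Ap1E -(sum_count_eq_size Ap1s_L level_le level_ex) size_L.
split=> [sum_d|[N' [c [maxN' [card_c sum_d]]]]].
  exists N, (fun s => count (fun x => `[< Ap1s a d s x >]) L); split=> //.
  by split=> // s _; apply: has_card_count.
rewrite -[RHS]sum_d (isMaxLevel_unique maxN maxN'); apply: eq_big_nat => s /andP [_ sN'].
exact: has_card_unique (has_card_count L_uniq Ap1s_L s) (card_c s sN').
Qed.
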